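(* Consider the iterates of AS-ALM and fix $k\ge0$ with $\eta_k\in(0,1/\nu)$. Let $\tilde\lambda^k=\lambda^k-\beta(Ax^{k+1}-b)$. Then for all $x\in\mathcal X$, $$f(x)-f(x^{k+1})+\langle x-x^{k+1},-A^\top\tilde\lambda^k\rangle\ge\langle x^{k+1}-x,\mathcal D_k(x^{k+1}-x^k)\rangle+\zeta^k(x).$$
   Context: Setting. $\mathcal X\subset\mathbb R^{n_1}$ is a nonempty closed convex set; $A\in\mathbb R^{n\times n_1}$, $b\in\mathbb R^n$; $f=\frac1N\sum_{j=1}^Nf_j$, each $f_j$ real-valued, convex and continuously differentiable on an open set containing $\mathcal X$. The problem is $\min\{f(x):Ax=b,\ x\in\mathcal X\}$. A fixed symmetric positive definite $H$ and a constant $\nu>0$ satisfy $\|\nabla f_j(x_1)-\nabla f_j(x_2)\|_{H^{-1}}\le\nu\|x_1-x_2\|_H$ for all $x_1,x_2\in\mathcal X$ and all $j$. For symmetric $G$, $\|v\|_G^2:=v^\top Gv$; $G_1\succeq G_2$ means $G_1-G_2$ is positive semidefinite. Subroutine xsub. Inputs: $x^k\in\mathcal X$, $\breve x^k$, $h\in\mathbb R^{n_1}$, an integer $m_k\ge1$, $\eta_k>0$, a symmetric matrix $M_k$. Set $x_1=x^k$, $\breve x_1=\breve x^k$. For $t=1,\dots,m_k$: draw $\xi_t$ uniformly from $\{1,\dots,N\}$, independently of everything generated before; set $\beta_t=2/(t+1)$, $\gamma_t=2/(t\eta_k)$, $\hat x_t=\beta_t\breve x_t+(1-\beta_t)x_t$,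 $d_t=\nabla f_{\xi_t}(\hat x_t)+e_t$ where $e_t$ is a random vector whose conditional expectation given all previously generated random quantities and $\xi_t$ is $0$; $\breve x_{t+1}=\arg\min_{x\in\mathcal X}\{\langle d_t+h,x\rangle+\frac{\gamma_t}2\|x-\breve x_t\|_H^2+\frac12\|x-x^k\|_{M_k}^2\}$; $x_{t+1}=\beta_t\breve x_{t+1}+(1-\beta_t)x_t$. Output $x^{k+1}=x_{m_k+1}$, $\breve x^{k+1}=\breve x_{m_k+1}$. Put $\delta_t=\nabla f(\hat x_t)-d_t$ (inner quantities of outer iteration $k$), and for $x\in\mathcal X$ $$\zeta^k(x)=\frac{2}{m_k(m_k+1)}\Big[\frac1{\eta_k}\big(\|x-\breve x^{k+1}\|_H^2-\|x-\breve x^k\|_H^2\big)-\sum_{t=1}^{m_k}t\langle\delta_t,\breve x_t-x\rangle-\frac{\eta_k}{4(1-\eta_k\nu)}\sum_{t=1}^{m_k}t^2\|\delta_t\|_{H^{-1}}^2\Big].$$ Algorithm AS-ALM. Parameters: $\beta>0$, $s\in(0,2]$, the matrix $H$. Start: $(x^0,\lambda^0)\in\mathcal X\times\mathbb R^n$, $\breve x^0=x^0$. For $k=0,1,\dots$: choose an integer $m_k\ge1$, $\eta_k>0$ and a symmetric $M_k$ with $\mathcal D_k:=M_k-\beta A^\top A\succeq0$; set $h^k=-A^\top[\lambda^k-\beta(Ax^k-b)]$; compute $(x^{k+1},\breve x^{k+1})$ by xsub with inputs $x^k,\breve x^k,h^k,m_k,\eta_k,M_k$; $\lambda^{k+1}=\lambda^k-s\beta(Ax^{k+1}-b)$.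 *)

From HB Require Import structures.
From mathcomp Require Import all_boot all_order all_algebra.
From mathcomp Require Import all_classical all_reals all_analysis.
Set Implicit Arguments. Unset Strict Implicit. Unset Printing Implicit Defensive.
Import Order.TTheory GRing.Theory Num.Theory.
Import numFieldNormedType.Exports.
Local Open Scope classical_set_scope.
Local Open Scope ring_scope.

Definition dotv {R : realType} {n : nat} (u v : 'cV[R]_n) : R := (u^T *m v) 0 0.

Definition sqnormG {R : realType} {n : nat} (G : 'M[R]_n) (v : 'cV[R]_n) : R :=
  dotv v (G *m v).

Definition normG {R : realType} {n : nat} (G : 'M[R]_n) (v : 'cV[R]_n) : R :=
  Num.sqrt (sqnormG G v).

Definition spd {R : realType} {n : nat} (G : 'M[R]_n) : Prop :=
  G^T = G /\ forall v : 'cV[R]_n, v != 0 -> 0 < sqnormG G v.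

(* positive semidefinite (for symmetric G):  G1 \succeq G2 iff G1 - G2 psd *)
Definition psd {R : realType} {n : nat} (G : 'M[R]_n) : Prop :=
  forall v : 'cV[R]_n, 0 <= sqnormG G v.

Definition convex_setR {R : realType} {n : nat} (X : set 'cV[R]_n) : Prop :=
  forall x y (t : R), X x -> X y -> 0 <= t <= 1 -> X (t *: x + (1 - t) *: y).

Definition convex_onR {R : realType} {n : nat} (X : set 'cV[R]_n)
  (f : 'cV[R]_n -> R) : Prop :=
  forall x y (t : R), X x -> X y -> 0 <= t <= 1 ->
    f (t *: x + (1 - t) *: y) <= t * f x + (1 - t) * f y.

Definition gradient {R : realType} {n : nat} (f : 'cV[R]_n -> R)
  (x : 'cV[R]_n) : 'cV[R]_n :=
  \col_i ('D_(delta_mx i 0) f x : R).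

Definition C1_on {R : realType} {n : nat} (U : set 'cV[R]_n)
  (f : 'cV[R]_n -> R) : Prop :=
  (forall x, U x -> differentiable f x) /\
  (forall x, U x -> {for x, continuous (gradient f)}).

Definition favg {R : realType} {n N : nat} (fs : 'I_N -> 'cV[R]_n -> R)
  (x : 'cV[R]_n) : R := N%:R^-1 * \sum_(j < N) fs j x.

Definition xsub_obj {R : realType} {n : nat} (H M : 'M[R]_n)
  (d h xbt xk : 'cV[R]_n) (gam : R) (x : 'cV[R]_n) : R :=
  dotv (d + h) x + gam / 2 * sqnormG H (x - xbt) + 1 / 2 * sqnormG M (x - xk).

Section ASALM.
Variables (R : realType) (n1 n N : nat).
Variables (A : 'M[R]_(n, n1)) (b : 'cV[R]_n) (fs : 'I_N -> 'cV[R]_n1 -> R).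
Variables (H : 'M[R]_n1) (beta s : R).

Definition hk (xk : 'cV[R]_n1) (lamk : 'cV[R]_n) : 'cV[R]_n1 :=
  - (A^T *m (lamk - beta *: (A *m xk - b))).

Definition beta_t (t : nat) : R := 2 / (t%:R + 1).
Definition gamma_t (etak : R) (t : nat) : R := 2 / (t%:R * etak).

(* inner quantities of outer iteration k; xin k t = x_t, xbin k t = breve x_t,
   xi k t = xi_t, e k t = e_t *)
Definition xhat (xin xbin : nat -> nat -> 'cV[R]_n1) (k t : nat) : 'cV[R]_n1 :=
  beta_t t *: xbin k t + (1 - beta_t t) *: xin k t.

Definition dir (xin xbin : nat -> nat -> 'cV[R]_n1) (xi : nat -> nat -> 'I_N)
  (e : nat -> nat -> 'cV[R]_n1) (k t : nat) : 'cV[R]_n1 :=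
  gradient (fs (xi k t)) (xhat xin xbin k t) + e k t.

Definition delta (xin xbin : nat -> nat -> 'cV[R]_n1) (xi : nat -> nat -> 'I_N)
  (e : nat -> nat -> 'cV[R]_n1) (k t : nat) : 'cV[R]_n1 :=
  gradient (favg fs) (xhat xin xbin k t) - dir xin xbin xi e k t.

(* The complete (pathwise) run of AS-ALM: all iterates, all inner iterates,
   for an arbitrary realization (xi, e) of the random quantities. *)
Definition asalm_run (X : set 'cV[R]_n1) (m : nat -> nat) (eta : nat -> R)
  (M : nat -> 'M[R]_n1) (x xb : nat -> 'cV[R]_n1) (lam : nat -> 'cV[R]_n)
  (xin xbin : nat -> nat -> 'cV[R]_n1) (xi : nat -> nat -> 'I_N)
  (e : nat -> nat -> 'cV[R]_n1) : Prop :=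
  X (x 0%N) /\ xb 0%N = x 0%N /\
  forall k : nat,
    (0 < m k)%N /\ 0 < eta k /\ (M k)^T = M k /\
        psd (M k - beta *: (A^T *m A)) /\
        xin k 1%N = x k /\ xbin k 1%N = xb k /\
        (forall t : nat, (1 <= t <= m k)%N ->
           [/\ X (xbin k t.+1),
               (forall y, X y ->
                  xsub_obj H (M k) (dir xin xbin xi e k t) (hk (x k) (lam k))
                    (xbin k t) (x k) (gamma_t (eta k) t) (xbin k t.+1)
                  <= xsub_obj H (M k) (dir xin xbin xi e k t) (hk (x k) (lam k))
                    (xbin k t) (x k) (gamma_t (eta k) t) y) &
               xin k t.+1 = beta_t t *: xbin k t.+1 + (1 - beta_t t) *: xin k t]) /\
        x k.+1 = xin k (m k).+1 /\
        xb k.+1 = xbin k (m k).+1 /\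
        lam k.+1 = lam k - (s * beta) *: (A *m x k.+1 - b).

Definition zeta (nu : R) (m : nat -> nat) (eta : nat -> R)
  (xb : nat -> 'cV[R]_n1)
  (xin xbin : nat -> nat -> 'cV[R]_n1) (xi : nat -> nat -> 'I_N)
  (e : nat -> nat -> 'cV[R]_n1) (k : nat) (x : 'cV[R]_n1) : R :=
  2 / ((m k)%:R * ((m k)%:R + 1)) *
  ( (eta k)^-1 * (sqnormG H (x - xb k.+1) - sqnormG H (x - xb k))
    - \sum_(1 <= t < (m k).+1)
        t%:R * dotv (delta xin xbin xi e k t) (xbin k t - x)
    - eta k / (4 * (1 - eta k * nu)) *
      \sum_(1 <= t < (m k).+1)
        (t%:R ^+ 2) * sqnormG (invmx H) (delta xin xbin xi e k t)).

End ASALM.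

From HB Require Import structures.
From mathcomp Require Import all_boot all_order all_algebra.
From mathcomp Require Import all_classical all_reals all_analysis.
From mathcomp Require Import ring lra.
Import Order.TTheory GRing.Theory Num.Theory.
Import numFieldNormedType.Exports.
Local Open Scope classical_set_scope.
Local Open Scope ring_scope.
Set Implicit Arguments. Unset Strict Implicit.

(* Fix k and z in X, and consider
   the potential  Psi(y) = f y + <h^k, y> + 1/2 ||y - x^k||_M^2 + 1/2 ||y - z||_M^2.
   Each accelerated inner step of xsub satisfies, with weights beta_t = 2/(t+1),
     Psi(x_{t+1}) - Psi(z) <= (1 - beta_t) (Psi(x_t) - Psi(z)) + error_t,
   obtained from the descent lemma for the H / H^-1 Lipschitz gradient of f, the
   convexity of f, the three-point inequality of the strongly convex subproblem,
   and Young's inequality for the gradient errors delta_t.  Multiplied by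
   t (t+1) / 2 these inequalities telescope over t = 1..m_k into
   Psi(x^{k+1}) - Psi(z) <= -zeta^k(z), and expanding the squares turns this into
   the claimed inequality with the multiplier lambda~ = lambda^k - beta (A x^{k+1} - b). *)

Section InnerProduct.
Variables (R : realType) (p : nat).
Implicit Types (u v w : 'cV[R]_p) (G : 'M[R]_p) (a : R).

Lemma dotvDl u v w : dotv (u + v) w = dotv u w + dotv v w.
Proof. by rewrite /dotv linearD /= mulmxDl mxE. Qed.
Lemma dotvDr u v w : dotv w (u + v) = dotv w u + dotv w v.
Proof. by rewrite /dotv mulmxDr mxE. Qed.
Lemma dotvZl a u w : dotv (a *: u) w = a * dotv u w.
Proof. by rewrite /dotv linearZ /= -scalemxAl mxE. Qed.
Lemma dotvZr a u w : dotv w (a *: u) = a * dotv w u.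
Proof. by rewrite /dotv -scalemxAr mxE. Qed.
Lemma dotvNl u w : dotv (- u) w = - dotv u w.
Proof. by rewrite -scaleN1r dotvZl mulN1r. Qed.
Lemma dotvNr u w : dotv w (- u) = - dotv w u.
Proof. by rewrite -scaleN1r dotvZr mulN1r. Qed.
Lemma dotvBl u v w : dotv (u - v) w = dotv u w - dotv v w.
Proof. by rewrite dotvDl dotvNl. Qed.
Lemma dotvBr u v w : dotv w (u - v) = dotv w u - dotv w v.
Proof. by rewrite dotvDr dotvNr. Qed.
Lemma dotvC u v : dotv u v = dotv v u.
Proof. by rewrite /dotv -[in LHS](trmxK (u^T *m v)) trmx_mul trmxK mxE. Qed.
Lemma dotv0r u : dotv u 0 = 0.
Proof. by rewrite /dotv mulmx0 mxE. Qed.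
Lemma dotvM u G v : dotv u (G *m v) = dotv (G^T *m u) v.
Proof. by rewrite /dotv trmx_mul trmxK mulmxA. Qed.

Lemma dotv_self_ge0 w : 0 <= dotv w w.
Proof.
rewrite /dotv mxE; apply: sumr_ge0 => i _; rewrite mxE -expr2; exact: sqr_ge0.
Qed.

Lemma sqnormD G u v : sqnormG G (u + v) =
  sqnormG G u + dotv u (G *m v) + dotv v (G *m u) + sqnormG G v.
Proof. by rewrite /sqnormG mulmxDr !dotvDl !dotvDr; lra. Qed.
Lemma sqnormZ G a u : sqnormG G (a *: u) = a ^+ 2 * sqnormG G u.
Proof. by rewrite /sqnormG -scalemxAr dotvZl dotvZr expr2 mulrA. Qed.
Lemma sqnormN G u : sqnormG G (- u) = sqnormG G u.
Proof. by rewrite -scaleN1r sqnormZ expr2 mulN1r opprK mul1r. Qed.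
Lemma sqnormB G u v : sqnormG G (u - v) =
  sqnormG G u - dotv u (G *m v) - dotv v (G *m u) + sqnormG G v.
Proof. by rewrite sqnormD sqnormN mulmxN !dotvNl !dotvNr /=; lra. Qed.
Lemma sqnorm0 G : sqnormG G 0 = 0.
Proof. by rewrite /sqnormG mulmx0 dotv0r. Qed.
Lemma sqnormBC G u v : sqnormG G (u - v) = sqnormG G (v - u).
Proof. by rewrite -sqnormN opprB. Qed.

Lemma sqnorm_comb G a u v : sqnormG G (a *: u + (1 - a) *: v) =
  a * sqnormG G u + (1 - a) * sqnormG G v - a * (1 - a) * sqnormG G (u - v).
Proof. by rewrite sqnormB sqnormD !sqnormZ -!scalemxAr !dotvZl !dotvZr; ring. Qed.

Lemma sqnorm_convex G a u v : psd G -> 0 <= a <= 1 ->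
  sqnormG G (a *: u + (1 - a) *: v) <= a * sqnormG G u + (1 - a) * sqnormG G v.
Proof.
move=> pG /andP[a0 a1]; rewrite sqnorm_comb.
have : 0 <= a * (1 - a) * sqnormG G (u - v).
  by apply: mulr_ge0 => //; apply: mulr_ge0; lra.
lra.
Qed.

Lemma comb_shift (y c : 'cV[R]_p) a : a *: y + (1 - a) *: c = c + a *: (y - c).
Proof. by apply/matrixP => i j; rewrite !mxE; ring. Qed.

End InnerProduct.

Section PositiveDefinite.
Variables (R : realType) (p : nat).
Implicit Types (u w : 'cV[R]_p) (G : 'M[R]_p).

Lemma spd_psd G : spd G -> psd G.
Proof.
case=> _ pG v; have [->|nz] := eqVneq v 0; first by rewrite sqnorm0.
exact/ltW/pG.
Qed.

Lemma spd_unit G : spd G -> G \in unitmx.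
Proof.
case=> sG pG; rewrite unitmxE unitfE; apply/negP => /det0P [v nz vG].
have nzu : v^T != 0 by rewrite trmx_eq0.
have := pG _ nzu; rewrite /sqnormG.
have -> : G *m v^T = 0 by rewrite -sG -trmx_mul vG trmx0.
by rewrite dotv0r ltxx.
Qed.

(* ||u||_{G^-1}^2 = ||G^-1 u||_G^2 >= 0. *)
Lemma sqnorm_inv_ge0 G u : spd G -> 0 <= sqnormG (invmx G) u.
Proof.
move=> sp; have uG := spd_unit sp; have [sG _] := sp.
have := spd_psd sp (invmx G *m u).
by rewrite /sqnormG mulmxA (mulmxV uG) mul1mx dotvC.
Qed.

(* Young's inequality in the dual pair of norms ||.||_G, ||.||_{G^-1}:
   <u, w> <= a/2 ||w||_G^2 + 1/(2a) ||u||_{G^-1}^2; it follows from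
   ||w - a^-1 G^-1 u||_G^2 >= 0. *)
Lemma young G u w a : spd G -> 0 < a ->
  dotv u w - a / 2 * sqnormG G w <= 1 / (2 * a) * sqnormG (invmx G) u.
Proof.
move=> sp a0; have uG := spd_unit sp; have [sG _] := sp.
have := spd_psd sp (w - a^-1 *: (invmx G *m u)).
rewrite sqnormB sqnormZ -scalemxAr dotvZr dotvZl.
rewrite mulmxA (mulmxV uG) mul1mx.
rewrite dotvM sG mulmxA (mulmxV uG) mul1mx.
rewrite [sqnormG G (invmx G *m u)]/sqnormG mulmxA (mulmxV uG) mul1mx.
rewrite [dotv (invmx G *m u) u]dotvC [dotv u w]dotvC -/(sqnormG (invmx G) u).
move=> nonneg.
have scaled : 0 <= a / 2 * (sqnormG G w - a^-1 * dotv w u - a^-1 * dotv w u +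
   a^-1 ^+ 2 * sqnormG (invmx G) u) by apply: mulr_ge0 => //; lra.
have -> : dotv w u = a / 2 * sqnormG G w + 1 / (2 * a) * sqnormG (invmx G) u
   - a / 2 * (sqnormG G w - a^-1 * dotv w u - a^-1 * dotv w u +
      a^-1 ^+ 2 * sqnormG (invmx G) u).
  by field; rewrite gt_eqF.
lra.
Qed.

End PositiveDefinite.

Section Subproblem.
Variables (R : realType) (p : nat).

Lemma first_order_coef_ge0 (L C : R) :
  (forall t : R, 0 < t <= 1 -> 0 <= t * L + t ^+ 2 * C) -> 0 <= L.
Proof.
move=> h; rewrite leNgt; apply/negP => L0.
pose t := - L / (2 * (`|C| + 1) - L).
have D0 : 0 < 2 * (`|C| + 1) - L by have := normr_ge0 C; lra.
have t0 : 0 < t by apply: divr_gt0 => //; lra.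
have t1 : t <= 1 by rewrite /t ler_pdivrMr // mul1r; have := normr_ge0 C; lra.
have := h t; rewrite t0 t1 => /(_ isT).
have tC : t * C <= t * `|C| by apply: ler_wpM2l; [exact: ltW | exact: ler_norm].
have tC2 : t * `|C| * 2 < - L.
  have tD : t * (2 * (`|C| + 1) - L) = - L by rewrite /t divfK // gt_eqF.
  have := normr_ge0 C; nra.
rewrite (_ : t * L + t ^+ 2 * C = t * (L + t * C)); last by rewrite expr2; ring.
rewrite pmulr_rge0 //; nra.
Qed.

Variables (H M : 'M[R]_p) (d h bt xk : 'cV[R]_p) (gam : R).
Let Phi := xsub_obj H M d h bt xk gam.

Lemma xsub_obj_line (bs w : 'cV[R]_p) (t : R) :
  Phi (bs + t *: w) = Phi bs
   + t * (dotv (d + h) w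
          + gam / 2 * (dotv (bs - bt) (H *m w) + dotv w (H *m (bs - bt)))
          + 1 / 2 * (dotv (bs - xk) (M *m w) + dotv w (M *m (bs - xk))))
   + t ^+ 2 * (gam / 2 * sqnormG H w + 1 / 2 * sqnormG M w).
Proof.
rewrite /Phi /xsub_obj.
have shift c : bs + t *: w - c = (bs - c) + t *: w
  by apply/matrixP => i j; rewrite !mxE; ring.
rewrite !shift sqnormD [sqnormG M _]sqnormD !sqnormZ -!scalemxAr.
by rewrite !dotvZl !dotvZr dotvDr dotvZr; ring.
Qed.

(* Optimality of bs makes the linear coefficient along y - bs nonnegative, so
   Phi y - Phi bs is at least the quadratic coefficient. *)
Lemma three_point (X : set 'cV[R]_p) (bs y : 'cV[R]_p) :
  convex_setR X -> X bs -> X y -> (forall y', X y' -> Phi bs <= Phi y') ->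
  Phi bs + gam / 2 * sqnormG H (y - bs) + 1 / 2 * sqnormG M (y - bs) <= Phi y.
Proof.
move=> cX Xb Xy hmin; set w := y - bs.
pose C := gam / 2 * sqnormG H w + 1 / 2 * sqnormG M w.
have [L line] : exists L, forall t, Phi (bs + t *: w) = Phi bs + t * L + t ^+ 2 * C.
  by eexists => t; exact: xsub_obj_line.
have L0 : 0 <= L.
  apply: (first_order_coef_ge0 (C := C)) => t /andP[t0 t1].
  have Xt : X (t *: y + (1 - t) *: bs) by apply: cX => //; rewrite t1 ltW.
  by have := hmin _ Xt; rewrite comb_shift line; lra.
have := line 1; rewrite scale1r /w addrC subrK => ->.
by rewrite /C; lra.
Qed.

End Subproblem.

Section Calculus.
Variables (R : realType) (p : nat).
Implicit Types (f : 'cV[R]_p -> R) (x y v : 'cV[R]_p).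

Lemma grad_dot f a v : differentiable f a -> dotv (gradient f a) v = 'D_v f a.
Proof.
move=> df; rewrite deriveE //.
rewrite {2}[v]matrix_sum_delta linear_sum /dotv mxE.
apply: eq_bigr => i _; rewrite big_ord1 linearZ /= !mxE deriveE //.
by rewrite [ord0]ord1 mulrC.
Qed.

Lemma segment_comb x y (t : R) : t *: (y - x) + x = t *: y + (1 - t) *: x.
Proof. by apply/matrixP => i j; rewrite !mxE; ring. Qed.

(* Supporting-hyperplane inequality for a convex differentiable function:
   the difference quotients (f(x + t(y-x)) - f x)/t are bounded by f y - f x
   for t in (0, 1], and converge to the directional derivative. *)
Lemma convex_grad_ineq (X : set 'cV[R]_p) f x y :
  convex_onR X f -> X x -> X y -> differentiable f x ->
  f x + dotv (gradient f x) (y - x) <= f y.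
Proof.
move=> cf Xx Xy df; rewrite grad_dot //; set v := y - x.
have dq : derivable f x v by exact: diff_derivable.
set q := (fun t : R => t^-1 *: ((f \o shift x) (t *: v) - f x)).
have q_right : q @ 0^'+ --> 'D_v f x.
  move=> A /dq /nbhs_ballP [_ /posnumP[e] xe_A].
  by exists e%:num => //= z xe_z /gt_eqF/negbT/xe_A; exact.
suff : 'D_v f x <= f y - f x by lra.
apply: (cvgr_to_le q_right).
exists 1 => //= t; rewrite /ball /= sub0r normrN => t1 t0.
have t1' : t <= 1 by move: t1; rewrite gtr0_norm // => /ltW.
rewrite /q /= segment_comb.
have := cf y x t Xy Xx; rewrite (ltW t0) t1' => /(_ isT) hc.
rewrite -ler_pdivlMl ?invr_gt0 // invrK; lra.
Qed.

Lemma segment_derive f x v (t : R) : differentiable f (t *: v + x) ->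
  is_derive t 1 (fun s : R => f (s *: v + x)) (dotv (gradient f (t *: v + x)) v).
Proof.
move=> df.
have E : (fun h : R => h^-1 *: (((fun s : R => f (s *: v + x)) \o shift t) (h *: 1)
                               - f (t *: v + x))) =
         (fun h : R => h^-1 *: ((f \o shift (t *: v + x)) (h *: v) - f (t *: v + x))).
  apply/funext => h /=; congr (_ *: (f _ - _)).
  rewrite (_ : h *: (1 : R) = h); last exact: mulr1.
  by apply/matrixP => i j; rewrite !mxE; ring.
have dv : derivable f (t *: v + x) v by exact: diff_derivable.
apply: DeriveDef.
  exact: (eq_ind _ (fun F : R -> R => cvg (F @ 0^')) dv _ (esym E)).
rewrite grad_dot //.
exact: (congr1 (fun F : R -> R => lim (F @ 0^')) E).
Qed.

Lemma sqrt_le_sq (S Q nu : R) : 0 <= S -> 0 <= Q -> 0 < nu ->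
  Num.sqrt S <= nu * Num.sqrt Q -> S <= nu ^+ 2 * Q.
Proof.
move=> S0 Q0 nu0 h; rewrite -(sqr_sqrtr S0) -(sqr_sqrtr Q0) -exprMn.
by rewrite ler_sqr // ?nnegrE ?sqrtr_ge0 //; apply: mulr_ge0; rewrite ?sqrtr_ge0 ?ltW.
Qed.

Variables (H : 'M[R]_p) (nu : R).
Hypotheses (sH : spd H) (nu0 : 0 < nu).

Lemma lipschitz_dir_bound f x v (t : R) : 0 < t ->
  normG (invmx H) (gradient f (t *: v + x) - gradient f x)
    <= nu * normG H (t *: v + x - x) ->
  dotv (gradient f (t *: v + x) - gradient f x) v <= nu * t * sqnormG H v.
Proof.
move=> t0; rewrite /normG addrK sqnormZ; set u := _ - _ => lip.
have tn : 0 < nu * t by exact: mulr_gt0.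
have hy := young u v sH tn.
have hs := sqrt_le_sq (sqnorm_inv_ge0 u sH)
  (mulr_ge0 (sqr_ge0 t) (spd_psd sH v)) nu0 lip.
have hs2 : 1 / (2 * (nu * t)) * sqnormG (invmx H) u
    <= 1 / (2 * (nu * t)) * (nu ^+ 2 * (t ^+ 2 * sqnormG H v)).
  by apply: ler_wpM2l hs; rewrite divr_ge0 // ltW // mulr_gt0.
have E : 1 / (2 * (nu * t)) * (nu ^+ 2 * (t ^+ 2 * sqnormG H v))
    = nu * t / 2 * sqnormG H v by field; rewrite !gt_eqF.
lra.
Qed.

(* The descent lemma: f y <= f x + <grad f x, y - x> + nu/2 ||y - x||_H^2.
   The function phi(t) = f(x + t v) - t <grad f x, v> - t^2 nu/2 ||v||_H^2
   has a nonpositive derivative on (0, 1), hence phi 1 <= phi 0. *)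
Lemma descent (X : set 'cV[R]_p) f x y :
  convex_setR X -> X x -> X y -> (forall z, X z -> differentiable f z) ->
  (forall x1 x2, X x1 -> X x2 ->
     normG (invmx H) (gradient f x1 - gradient f x2) <= nu * normG H (x1 - x2)) ->
  f y <= f x + dotv (gradient f x) (y - x) + nu / 2 * sqnormG H (y - x).
Proof.
move=> cX Xx Xy df lip; set v := y - x.
have Xseg t : 0 <= t <= 1 -> X (t *: v + x).
  by move=> ht; rewrite segment_comb; exact: cX.
set D := dotv (gradient f x) v; set c := nu / 2 * sqnormG H v.
pose g := fun t : R => f (t *: v + x).
pose phi := g - D \*: (@id R) - c \*: ((@id R) * (@id R)).
have phi_derive t : X (t *: v + x) -> is_derive t 1 phi
    (dotv (gradient f (t *: v + x)) v - D *: 1 - c *: (t *: 1 + t *: 1)).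
  by move=> Xt; have gd := segment_derive (df _ Xt); exact: is_deriveB.
have Xopen t : t \in `]0, 1[ -> X (t *: v + x).
  by rewrite in_itv /= => /andP[t0 t1]; apply: Xseg; rewrite !ltW.
have : phi 1 <= phi 0.
  apply: (@ler0_derive1_le_cc _ phi 0 1).
  - by move=> t /Xopen /phi_derive [].
  - move=> t tI; have Xt := Xopen _ tI; move: tI; rewrite in_itv /= => /andP[t0 _].
    rewrite derive1E (@derive_val _ _ _ _ _ _ _ (phi_derive _ Xt)) /=.
    rewrite -[X in _ - X - _ <= _]/(D * 1) -[X in _ - _ - X <= _]/(c * (t * 1 + t * 1)) !mulr1.
    have := lipschitz_dir_bound t0 (lip _ _ Xt Xx).
    by rewrite dotvBl -/D /c; lra.
  - apply: continuous_in_subspaceT => t; rewrite inE /= in_itv /= => tI.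
    have [dd _] := phi_derive t (Xseg _ tI).
    exact/differentiable_continuous/derivable1_diffP.
  - by rewrite in_itv /= lexx ler01.
  - by rewrite in_itv /= lexx ler01.
  - exact: ler01.
have ev r : phi r = f (r *: v + x) - D * r - c * (r * r) by [].
rewrite !ev scale1r scale0r add0r /v subrK; lra.
Qed.

End Calculus.

Section Average.
Variables (R : realType) (p N : nat) (fs : 'I_N -> 'cV[R]_p -> R).

Lemma dotv_suml (F : 'I_N -> 'cV[R]_p) w :
  dotv (\sum_(j < N) F j) w = \sum_(j < N) dotv (F j) w.
Proof.
elim/big_ind2 : _ => //; first by rewrite /dotv linear0 mul0mx mxE.
by move=> a1 a2 b1 b2 <- <-; rewrite dotvDl.
Qed.

Lemma favg_dot a w : (forall j, differentiable (fs j) a) ->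
  dotv (gradient (favg fs) a) w = N%:R^-1 * \sum_(j < N) dotv (gradient (fs j) a) w.
Proof.
move=> df; rewrite -dotv_suml -dotvZl; congr dotv.
have -> : favg fs = N%:R^-1 \*: (\sum_(j < N) fs j).
  by apply/funext => z; rewrite /favg /= fct_sumE.
apply/matrixP => i k; rewrite !mxE summxE deriveZ; last first.
  by apply: derivable_sum => j; exact: diff_derivable.
rewrite derive_sum; last by move=> j; exact: diff_derivable.
by congr (_ * _); apply: eq_bigr => j _; rewrite mxE.
Qed.

Lemma favg_convex_ineq (X : set 'cV[R]_p) x y :
  (forall j, convex_onR X (fs j)) -> X x -> X y ->
  (forall j, differentiable (fs j) x) ->
  favg fs x + dotv (gradient (favg fs) x) (y - x) <= favg fs y.
Proof.
move=> cf Xx Xy df; rewrite favg_dot // /favg -mulrDr.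
apply: ler_wpM2l; first by rewrite invr_ge0.
rewrite -big_split /=; apply: ler_sum => j _.
exact: (convex_grad_ineq (cf j)).
Qed.

Lemma favg_descent (X : set 'cV[R]_p) (H : 'M[R]_p) nu x y :
  (0 < N)%N -> spd H -> 0 < nu -> convex_setR X -> X x -> X y ->
  (forall j z, X z -> differentiable (fs j) z) ->
  (forall j x1 x2, X x1 -> X x2 ->
     normG (invmx H) (gradient (fs j) x1 - gradient (fs j) x2)
       <= nu * normG H (x1 - x2)) ->
  favg fs y <= favg fs x + dotv (gradient (favg fs) x) (y - x)
               + nu / 2 * sqnormG H (y - x).
Proof.
move=> N0 sH nu0 cX Xx Xy df lip.
rewrite favg_dot; last by move=> j; exact: df.
rewrite /favg -mulrDr.
have -> : nu / 2 * sqnormG H (y - x) =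
    N%:R^-1 * \sum_(j < N) (nu / 2 * sqnormG H (y - x)).
  move: (nu / 2 * _) => a.
  rewrite sumr_const card_ord -[a *+ N]mulr_natr mulrCA mulVf ?mulr1 //.
  by rewrite pnatr_eq0 -lt0n.
rewrite -mulrDr; apply: ler_wpM2l; first by rewrite invr_ge0.
rewrite -!big_split /=; apply: ler_sum => j _.
exact: (descent sH nu0 cX Xx Xy (df j) (lip j)).
Qed.

End Average.

(* The potential of the inner loop: with Psi(y) = f y + <h, y>
   + 1/2 ||y - x^k||_M^2 + 1/2 ||y - z||_M^2, the theorem is a bound on
   Psi(x^{k+1}) - Psi(z) (Psi(z) has no last term). *)
Definition PsiF (R : realType) (p : nat) (f : 'cV[R]_p -> R) (h : 'cV[R]_p)
  (M : 'M[R]_p) (xk z y : 'cV[R]_p) : R :=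
  f y + dotv h y + 1 / 2 * sqnormG M (y - xk) + 1 / 2 * sqnormG M (y - z).

Section InnerStep.
Variables (R : realType) (p : nat).

(* One accelerated inner step (x_t, bx_t) -> (x_{t+1}, bx_{t+1}) with weight
   be = beta_t and proximal parameter ga = gamma_t contracts the potential gap
   by (1 - be), up to the error terms coming from g - d = delta_t; its
   ingredients are the descent lemma at xh, the convexity of f at xh (towards
   x_t and towards z), the three-point inequality of the subproblem, Young's
   inequality, and the convexity of ||.||_M^2. *)
Lemma inner_step (H M : 'M[R]_p) (nu : R) (f : 'cV[R]_p -> R)
  (g d h xk z xt bt bt1 xt1 xh : 'cV[R]_p) (be ga : R) :
  spd H -> psd M -> 0 <= be <= 1 -> 0 < ga - nu * be ->
  xt1 = be *: bt1 + (1 - be) *: xt ->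
  xh = be *: bt + (1 - be) *: xt ->
  f xt1 <= f xh + dotv g (xt1 - xh) + nu / 2 * sqnormG H (xt1 - xh) ->
  f xh + dotv g (xt - xh) <= f xt ->
  f xh + dotv g (z - xh) <= f z ->
  xsub_obj H M d h bt xk ga bt1 + ga / 2 * sqnormG H (z - bt1)
     + 1 / 2 * sqnormG M (z - bt1) <= xsub_obj H M d h bt xk ga z ->
  PsiF f h M xk z xt1 - PsiF f h M xk z z <=
  (1 - be) * (PsiF f h M xk z xt - PsiF f h M xk z z)
  + be * dotv (g - d) (bt - z)
  + be * ga / 2 * (sqnormG H (z - bt) - sqnormG H (z - bt1))
  + be / (2 * (ga - nu * be)) * sqnormG (invmx H) (g - d).
Proof.
move=> sH pM /andP[b0 b1] a0 ext1 exh hdesc hc1 hc2 h3.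
have e1 : xt1 - xh = be *: (bt1 - bt).
  by rewrite ext1 exh; apply/matrixP => i j; rewrite !mxE; ring.
have e2 : dotv g (xt1 - xh) = (1 - be) * dotv g (xt - xh) + be * dotv g (z - xh)
     + be * dotv g (bt1 - z).
  rewrite -!dotvZr -!dotvDr; congr (dotv g _).
  by rewrite ext1; apply/matrixP => i j; rewrite !mxE; ring.
have e3 : dotv g (bt1 - z) = dotv d bt1 - dotv d z + dotv (g - d) (bt - z)
     + dotv (g - d) (bt1 - bt).
  rewrite -addrA -dotvDr.
  have -> : bt - z + (bt1 - bt) = bt1 - z
    by apply/matrixP => i j; rewrite !mxE; ring.
  by rewrite !dotvBl !dotvBr; ring.
have e4 : sqnormG H (xt1 - xh) = be ^+ 2 * sqnormG H (bt1 - bt) by rewrite e1 sqnormZ.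
have e5 : dotv h xt1 = be * dotv h bt1 + (1 - be) * dotv h xt
  by rewrite ext1 dotvDr !dotvZr.
have cvx c : sqnormG M (xt1 - c)
    <= be * sqnormG M (bt1 - c) + (1 - be) * sqnormG M (xt - c).
  have -> : xt1 - c = be *: (bt1 - c) + (1 - be) *: (xt - c)
    by rewrite ext1; apply/matrixP => i j; rewrite !mxE; ring.
  by apply: sqnorm_convex => //; rewrite b0 b1.
have cv1 := cvx xk; have cv2 := cvx z.
have hy := young (g - d) (bt1 - bt) sH a0.
rewrite /xsub_obj !dotvDl (sqnormBC M z bt1) in h3.
have h3' := ler_wpM2l b0 h3.
have hy' := ler_wpM2l b0 hy.
have b1' : 0 <= 1 - be by lra.
have hc1' := ler_wpM2l b1' hc1.
have hc2' := ler_wpM2l b0 hc2.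
rewrite /PsiF subrr sqnorm0 e5; move: hdesc; rewrite e2 e3 e4 => hdesc.
rewrite (_ : be / (2 * (ga - nu * be)) = be * (1 / (2 * (ga - nu * be))));
  last by rewrite mulrA mulr1.
move: hdesc h3' hy' hc1' hc2' cv1 cv2.
move: (f xt1) (f xh) (f xt) (f z) (dotv g (xt - xh)) (dotv g (z - xh)) => F1 Fh Ft Fz G1 G2.
move: (1 / (2 * (ga - nu * be))) (sqnormG (invmx H) (g - d)) => cinv S.
move=> *; nra.
Qed.

End InnerStep.

(* The step-size bookkeeping for beta_t = 2/(t+1), gamma_t = 2/(t eta),
   written with r = t as a real number >= 1. *)
Section StepSizes.
Variable R : realType.

Lemma beta_t_bounds (t : nat) : (1 <= t)%N -> 0 <= beta_t R t <= 1.
Proof.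
move=> t1; rewrite /beta_t.
have r1 : (1 : R) <= t%:R by rewrite ler1n.
apply/andP; split; first by apply: divr_ge0 => //; lra.
by rewrite ler_pdivrMr; lra.
Qed.

Lemma gap_pos (r eta nu : R) : 1 <= r -> 0 < eta -> 0 < nu -> eta * nu < 1 ->
  0 < 2 / (r * eta) - nu * (2 / (r + 1)).
Proof.
move=> r1 e0 n0 en.
have r0 : 0 < r by lra.
rewrite subr_gt0 mulrA ltr_pdivrMr ?ltr_wpDl // ?ler01 //; last by lra.
rewrite mulrAC ltr_pdivlMr ?mulr_gt0 //.
nra.
Qed.

(* The Young-error coefficient beta_t / (2 (gamma_t - nu beta_t)), rescaled by
   t (t+1) / 2, is at most eta / (4 (1 - eta nu)) t^2. *)
Lemma young_coef_bound (r eta nu : R) : 1 <= r -> 0 < eta -> 0 < nu -> eta * nu < 1 ->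
  r / (2 * (2 / (r * eta) - nu * (2 / (r + 1))))
    <= eta / (4 * (1 - eta * nu)) * r ^+ 2.
Proof.
move=> r1 e0 n0 en.
have r0 : 0 < r by lra.
set a := 2 / (r * eta) - nu * (2 / (r + 1)).
have a0 : 0 < a by exact: gap_pos.
set c := eta / (4 * (1 - eta * nu)).
have key : 1 <= a * (2 * r * c).
  have ar : a * (r * eta) = 2 - nu * eta * (2 * r / (r + 1)).
    by rewrite /a; field; lra.
  have q2 : nu * eta * (2 * r / (r + 1)) <= 2 * (nu * eta).
    have q1 : 2 * r / (r + 1) <= 2 by rewrite ler_pdivrMr; lra.
    have ne0 : 0 <= nu * eta by apply: mulr_ge0; lra.
    move: (2 * r / (r + 1)) q1 => q qX; nra.
  rewrite (_ : a * (2 * r * c) = a * (r * eta) / (2 * (1 - eta * nu)));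
    last by rewrite /c; field; lra.
  by rewrite ler_pdivlMr; [rewrite ar; nra | lra].
rewrite ler_pdivrMr; last by lra.
nra.
Qed.

(* The inner step, multiplied by the weight t (t+1) / 2: this is the form in
   which consecutive steps telescope (t (t+1)/2 (1 - beta_t) = (t-1) t / 2). *)
Lemma scaled_step (r eta nu P1 P0 Dd Q0 Q1 S : R) :
  1 <= r -> 0 < eta -> 0 < nu -> eta * nu < 1 -> 0 <= S ->
  P1 <= (1 - 2 / (r + 1)) * P0 + 2 / (r + 1) * Dd
        + 2 / (r + 1) * (2 / (r * eta)) / 2 * (Q0 - Q1)
        + 2 / (r + 1) / (2 * (2 / (r * eta) - nu * (2 / (r + 1)))) * S ->
  r * (r + 1) / 2 * P1 <= (r - 1) * r / 2 * P0 + r * Dd + eta^-1 * (Q0 - Q1)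
     + eta / (4 * (1 - eta * nu)) * (r ^+ 2 * S).
Proof.
move=> r1 e0 n0 en S0 h.
have r0 : 0 < r by lra.
set a := 2 / (r * eta) - nu * (2 / (r + 1)) in h *.
have KS : r / (2 * a) * S <= eta / (4 * (1 - eta * nu)) * (r ^+ 2 * S).
  by rewrite mulrA; apply: ler_wpM2r => //; exact: young_coef_bound.
have a0 : 0 < a by exact: gap_pos.
have w0 : 0 <= r * (r + 1) / 2 by apply: divr_ge0 => //; nra.
have h' := ler_wpM2l w0 h.
have F1 : r * (r + 1) / 2 * ((1 - 2 / (r + 1)) * P0) = (r - 1) * r / 2 * P0
  by field; lra.
have F2 : r * (r + 1) / 2 * (2 / (r + 1) * Dd) = r * Dd by field; lra.
have F3 : r * (r + 1) / 2 * (2 / (r + 1) * (2 / (r * eta)) / 2 * (Q0 - Q1))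
    = eta^-1 * (Q0 - Q1) by field; rewrite gt_eqF //; lra.
have F4 : r * (r + 1) / 2 * (2 / (r + 1) / (2 * a) * S) = r / (2 * a) * S.
  by field; rewrite gt_eqF //=; lra.
move: h' F1 F2 F3 F4 KS; clear; clearbody a; move: (r * (r + 1) / 2) => w.
move: (1 - 2 / (r + 1)) (2 / (r + 1)) (2 / (r + 1) * (2 / (r * eta)) / 2) => A B C.
move: (2 / (r + 1) / (2 * a)) (r / (2 * a)) (eta / (4 * (1 - eta * nu))) => D K c.
move=> *; lra.
Qed.

End StepSizes.

(* The linear constraint enters only through h^k = -A^T (lambda^k - beta (A x^k - b))
   and D_k = M_k - beta A^T A. *)
Section Multiplier.
Variables (R : realType) (p n : nat) (A : 'M[R]_(n, p)).

Lemma dotv_tr (c : 'cV[R]_p) (w : 'cV[R]_n) : dotv c (A^T *m w) = dotv (A *m c) w.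
Proof. by rewrite /dotv mulmxA -trmx_mul. Qed.

Lemma psd_of_psd_sub (M : 'M[R]_p) (beta : R) :
  psd (M - beta *: (A^T *m A)) -> 0 <= beta -> psd M.
Proof.
move=> h b0 v; have := h v.
rewrite /sqnormG mulmxBl dotvBr -scalemxAl dotvZr -mulmxA dotv_tr => h1.
have := dotv_self_ge0 (A *m v); nra.
Qed.

(* A bound Psi(x') - Psi(z) <= -zeta on the potential, built with h^k, is
   exactly the claimed variational inequality with the multiplier
   lambda~ = lambda - beta (A x' - b): expanding the squares, the cross terms
   of ||.||_M^2 together with the change from A x^k to A x' in the multiplier
   produce <x' - z, D (x' - x^k)>. *)
Lemma potential_to_multiplier (b lam : 'cV[R]_n) (M : 'M[R]_p) (beta : R)
  (f : 'cV[R]_p -> R) (xk x' z : 'cV[R]_p) (zeta : R) :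
  M^T = M ->
  PsiF f (- (A^T *m (lam - beta *: (A *m xk - b)))) M xk z x'
   - PsiF f (- (A^T *m (lam - beta *: (A *m xk - b)))) M xk z z <= - zeta ->
  f z - f x' + dotv (z - x') (- (A^T *m (lam - beta *: (A *m x' - b))))
   >= dotv (x' - z) ((M - beta *: (A^T *m A)) *m (x' - xk)) + zeta.
Proof.
move=> sM; rewrite /PsiF subrr sqnorm0.
set h := - (A^T *m (lam - beta *: (A *m xk - b))).
set c := z - x'; set a := x' - xk.
have xz : x' - z = - c by rewrite /c opprB.
have e1 : dotv c (- (A^T *m (lam - beta *: (A *m x' - b)))) =
   - (dotv (A *m c) lam - beta * (dotv (A *m c) (A *m x') - dotv (A *m c) b)).
  by rewrite dotvNr dotv_tr dotvBr dotvZr dotvBr.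
have eh : dotv h x' = dotv h z
   + (dotv (A *m c) lam - beta * (dotv (A *m c) (A *m xk) - dotv (A *m c) b)).
  have : dotv h z - dotv h x' = dotv c h by rewrite -dotvBr dotvC.
  rewrite /h dotvNr dotv_tr dotvBr dotvZr dotvBr; lra.
have eD : dotv (x' - z) ((M - beta *: (A^T *m A)) *m a) =
   - dotv c (M *m a) + beta * (dotv (A *m c) (A *m x') - dotv (A *m c) (A *m xk)).
  rewrite mulmxBl dotvBr -scalemxAl dotvZr -mulmxA xz !dotvNl dotv_tr /a.
  by rewrite !mulmxBr !dotvBr; ring.
have eM : sqnormG M (z - xk) = sqnormG M a + 2 * dotv c (M *m a) + sqnormG M c.
  have -> : z - xk = a + c by rewrite /a /c; apply/matrixP => i j; rewrite !mxE; ring.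
  by rewrite sqnormD dotvM sM dotvC; ring.
have eM2 : sqnormG M (x' - z) = sqnormG M c by rewrite xz sqnormN.
rewrite eD eh eM eM2 -/a e1; lra.
Qed.

End Multiplier.

Section Run.
Variables (R : realType) (n1 n N : nat) (X : set 'cV[R]_n1) (A : 'M[R]_(n, n1))
  (b : 'cV[R]_n) (fs : 'I_N -> 'cV[R]_n1 -> R) (H : 'M[R]_n1) (nu beta s : R)
  (m : nat -> nat) (eta : nat -> R) (M : nat -> 'M[R]_n1)
  (x xb : nat -> 'cV[R]_n1) (lam : nat -> 'cV[R]_n)
  (xin xbin : nat -> nat -> 'cV[R]_n1) (xi : nat -> nat -> 'I_N)
  (e : nat -> nat -> 'cV[R]_n1).
Hypothesis cX : convex_setR X.
Hypothesis run : asalm_run A b fs H beta s X m eta M x xb lam xin xbin xi e.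

(* All inner iterates of outer iteration k stay in X when x^k, bx^k do:
   bx_{t+1} is a minimizer over X and x_{t+1} a convex combination. *)
Lemma inner_feasible k : X (x k) -> X (xb k) ->
  forall t, (t <= m k)%N -> X (xin k t.+1) /\ X (xbin k t.+1).
Proof.
move=> Xx Xxb; have [_ [_ [_ [_ [xin1 [xbin1 [hst _]]]]]]] := proj2 (proj2 run) k.
elim=> [_|t IH tm]; first by rewrite xin1 xbin1.
have [Xt Xbt] := IH (ltnW tm); have [Xb1 _ ex1] := hst t.+1 tm.
by split => //; rewrite ex1; apply: cX => //; exact: beta_t_bounds.
Qed.

Lemma iterates_feasible k : X (x k) /\ X (xb k).
Proof.
have [X0 [xb0 hrun]] := run.
elim: k => [|k [Xx Xxb]]; first by rewrite xb0.
have [_ [_ [_ [_ [_ [_ [_ [xk1 [xbk1 _]]]]]]]]] := hrun k.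
by rewrite xk1 xbk1; apply: inner_feasible.
Qed.

Hypotheses (N0 : (0 < N)%N) (sH : spd H) (nu0 : 0 < nu) (beta0 : 0 <= beta).
Hypothesis dfs : forall j y, X y -> differentiable (fs j) y.
Hypothesis cfs : forall j, convex_onR X (fs j).
Hypothesis lip : forall j x1 x2, X x1 -> X x2 ->
  normG (invmx H) (gradient (fs j) x1 - gradient (fs j) x2) <= nu * normG H (x1 - x2).

Variables (k : nat) (z : 'cV[R]_n1).
Hypotheses (Xz : X z) (eta0 : 0 < eta k) (eta_nu : eta k * nu < 1).

Let Psi := PsiF (favg fs) (hk A b beta (x k) (lam k)) (M k) (x k) z.
Let c := eta k / (4 * (1 - eta k * nu)).
Let dlt := delta fs xin xbin xi e k.

Lemma run_scaled_step t : (t < m k)%N ->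
  t.+1%:R * (t.+1%:R + 1) / 2 * (Psi (xin k t.+2) - Psi z) <=
     (t.+1%:R - 1) * t.+1%:R / 2 * (Psi (xin k t.+1) - Psi z)
     + t.+1%:R * dotv (dlt t.+1) (xbin k t.+1 - z)
     + (eta k)^-1 * (sqnormG H (z - xbin k t.+1) - sqnormG H (z - xbin k t.+2))
     + c * (t.+1%:R ^+ 2 * sqnormG (invmx H) (dlt t.+1)).
Proof.
move=> tm.
have [Xxk Xxbk] := iterates_feasible k.
have [_ [_ [_ [Dpsd [_ [_ [hst _]]]]]]] := proj2 (proj2 run) k.
have [Xt Xbt] := inner_feasible Xxk Xxbk (ltnW tm).
have [Xt1 _] := inner_feasible Xxk Xxbk tm.
have [Xb1 hmin ex1] := hst t.+1 tm.
have bb := beta_t_bounds R (ltn0Sn t).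
have Xxh : X (xhat xin xbin k t.+1) by apply: cX.
have r1 : (1 : R) <= t.+1%:R by rewrite ler1n.
have hstep := inner_step (g := gradient (favg fs) (xhat xin xbin k t.+1))
   (d := dir fs xin xbin xi e k t.+1) sH (psd_of_psd_sub Dpsd beta0) bb
   (gap_pos r1 eta0 nu0 eta_nu) ex1 erefl
   (favg_descent N0 sH nu0 cX Xxh Xt1 dfs lip)
   (favg_convex_ineq cfs Xxh Xt (fun j => dfs j Xxh))
   (favg_convex_ineq cfs Xxh Xz (fun j => dfs j Xxh))
   (three_point cX Xb1 Xz hmin).
exact: scaled_step r1 eta0 nu0 eta_nu (sqnorm_inv_ge0 _ sH) hstep.
Qed.

(* Summing the scaled steps: the weights (t-1) t / 2 and t (t+1) / 2 of
   consecutive potential gaps telescope. *)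
Lemma inner_telescope T : (T <= m k)%N ->
  T%:R * (T%:R + 1) / 2 * (Psi (xin k T.+1) - Psi z) <=
  \sum_(1 <= t < T.+1) t%:R * dotv (dlt t) (xbin k t - z)
  + (eta k)^-1 * (sqnormG H (z - xbin k 1) - sqnormG H (z - xbin k T.+1))
  + c * \sum_(1 <= t < T.+1) (t%:R ^+ 2 * sqnormG (invmx H) (dlt t)).
Proof.
elim: T => [_|T IH Tm]; first by rewrite !big_geq // subrr !mul0r !mulr0 !addr0.
rewrite big_nat_recr //= [X in _ <= _ + _ + c * X]big_nat_recr //=.
have := IH (ltnW Tm); have := run_scaled_step Tm.
rewrite (_ : T.+1%:R = T%:R + 1 :> R); last by rewrite -addn1 natrD.
move: (Psi (xin k T.+2)) (Psi (xin k T.+1)) (Psi z) (T%:R : R) => P2 P1 P0 r.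
move=> *; nra.
Qed.

Lemma potential_gap_bound : Psi (x k.+1) - Psi z <= - zeta fs H nu m eta xb xin xbin xi e k z.
Proof.
have [m0 [_ [_ [_ [_ [xbin1 [_ [xk1 [xbk1 _]]]]]]]]] := proj2 (proj2 run) k.
have mpos : (0 : R) < (m k)%:R by rewrite ltr0n.
have W0 : 0 < (m k)%:R * ((m k)%:R + 1) / 2 :> R.
  by apply: divr_gt0 => //; apply: mulr_gt0 => //; lra.
have hT := inner_telescope (leqnn (m k)).
rewrite xbin1 -xbk1 -xk1 [X in X <= _]mulrC -ler_pdivlMr // in hT.
apply: le_trans hT _.
rewrite le_eqVlt; apply/orP; left; apply/eqP.
by rewrite /zeta -/c -/dlt; field; rewrite !gt_eqF //; lra.
Qed.

End Run.

Unset Implicit Arguments.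
Theorem lemma4p1 (R : realType) (n1 n N : nat)
  (X : set 'cV[R]_n1) (A : 'M[R]_(n, n1)) (b : 'cV[R]_n)
  (fs : 'I_N -> 'cV[R]_n1 -> R) (H : 'M[R]_n1) (nu beta s : R)
  (m : nat -> nat) (eta : nat -> R) (M : nat -> 'M[R]_n1)
  (x xb : nat -> 'cV[R]_n1) (lam : nat -> 'cV[R]_n)
  (xin xbin : nat -> nat -> 'cV[R]_n1) (xi : nat -> nat -> 'I_N)
  (e : nat -> nat -> 'cV[R]_n1) (k : nat) :
  (0 < N)%N ->
  X !=set0 -> closed X -> convex_setR X ->
  (forall j, exists U : set 'cV[R]_n1, [/\ open U, X `<=` U & C1_on U (fs j)]) ->
  (forall j, convex_onR X (fs j)) ->
  spd H -> 0 < nu ->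
  (forall j x1 x2, X x1 -> X x2 ->
     normG (invmx H) (gradient (fs j) x1 - gradient (fs j) x2)
       <= nu * normG H (x1 - x2)) ->
  0 < beta -> 0 < s <= 2 ->
  asalm_run A b fs H beta s X m eta M x xb lam xin xbin xi e ->
  0 < eta k < nu^-1 ->
  forall z : 'cV[R]_n1, X z ->
    let lamt := lam k - beta *: (A *m x k.+1 - b) in
    favg fs z - favg fs (x k.+1) + dotv (z - x k.+1) (- (A^T *m lamt))
    >= dotv (x k.+1 - z) ((M k - beta *: (A^T *m A)) *m (x k.+1 - x k))
       + zeta fs H nu m eta xb xin xbin xi e k z.
Proof.
move=> N0 _ _ cX hC cfs sH nu0 lip beta0 _ run /andP[eta0 eta_lt] z Xz.
cbv zeta. (* unfold the local definition of the multiplier lambda~ *)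
have dfs j y : X y -> differentiable (fs j) y.
  by have [U [_ XU [dU _]]] := hC j; move=> /XU; exact: dU.
have eta_nu : eta k * nu < 1.
  by move: eta_lt; rewrite -(ltr_pM2r nu0) mulVf // gt_eqF.
have [_ [_ [Msym _]]] := proj2 (proj2 run) k.
apply: potential_to_multiplier Msym _.
exact: (potential_gap_bound cX run N0 sH nu0 (ltW beta0) dfs cfs lip Xz eta0 eta_nu).
Qed.
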